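(* For $\mathbf b=\mathbf b_1+i\mathbf b_2\in\mathbb B^{n+1}_{\mathbb C}$ (with $\mathbf b_1,\mathbf b_2\in\mathbb R^{n+1}$), let $\Phi_{\mathbf b}:\mathbb B^{2n+2}\to\mathbb B^{2n+2}$ be $$\Phi_{\mathbf b}(\mathbf z)=\sqrt{1-|\mathbf b|^2}\,\frac{\mathbf z}{1+\bar{\mathbf b}\cdot\mathbf z}+\frac{1}{1+\sqrt{1-|\mathbf b|^2}}\Big(1+\frac{\sqrt{1-|\mathbf b|^2}}{1+\bar{\mathbf b}\cdot\mathbf z}\Big)\mathbf b,$$ where $\bar{\mathbf b}\cdot\mathbf z=\sum_j\bar b_jz_j$. Then: (1) $\Phi_{\mathbf b}$ extends to a $J_{\mathbb R}$-holomorphic diffeomorphism $\bar\Phi_{\mathbf b}:\bar{\mathbb B}^{2n+2}\to\bar{\mathbb B}^{2n+2}$. (2) At points of $\partial\mathbb B^{2n+2}$, $\bar\Phi_{\mathbf b}^*dr=W_{\mathbf b}\,dr$ and $\bar\Phi_{\mathbf b}^*\theta=W_{\mathbf b}\,\theta$, where, writing $\mathbf z=\mathbf x+i\mathbf y$, $$W_{\mathbf b}(\mathbf x,\mathbf y)=\frac{1-|\mathbf b_1|^2-|\mathbf b_2|^2}{(1+\mathbf b_1\cdot\mathbf x+\mathbf b_2\cdot\mathbf y)^2+(\mathbf b_2\cdot\mathbf x-\mathbf b_1\cdot\mathbf y)^2}.$$ (3) At points of $\partial\mathbb B^{2n+2}$, $$\bar\Phi_{\mathbf b}^*d\theta=W_{\mathbf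 b}\,d\theta+2(W_{\mathbf b}-W_{\mathbf b}^2)\,r\,dr\wedge\theta+dW_{\mathbf b}\wedge\theta+dr\wedge(dW_{\mathbf b}\circ J_{\mathbb R}).$$
   Context: Identify $\mathbb R^{2n+2}=\mathbb R^{n+1}_{\mathbf x}\times\mathbb R^{n+1}_{\mathbf y}$ with $\mathbb C^{n+1}$ via $\mathbf z=\mathbf x+i\mathbf y$, and the open unit ball $\mathbb B^{2n+2}$ with the complex unit ball $\mathbb B^{n+1}_{\mathbb C}$. $J_{\mathbb R}$ is the complex structure with $J_{\mathbb R}(\partial_{x_j})=-\partial_{y_j}$, $J_{\mathbb R}(\partial_{y_j})=\partial_{x_j}$; a map $\Phi$ is $J_{\mathbb R}$-holomorphic if $J_{\mathbb R}\circ D\Phi=D\Phi\circ J_{\mathbb R}$. $r=|\mathbf z|$, and $\theta=r^{-2}\sum_j(x_j\,dy_j-y_j\,dx_j)$ on $\mathbb R^{2n+2}\setminus\{0\}$ (equivalently $\theta=\frac1r dr\circ J_{\mathbb R}$). The exterior derivative convention is $d\beta(X,Y)=X(\beta(Y))-Y(\beta(X))-\beta([X,Y])$. Pullbacks are of forms on $\mathbb R^{2n+2}$ evaluated at boundary points (not restricted to the sphere). *)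

From HB Require Import structures.
From mathcomp Require Import all_boot all_order all_algebra.
From mathcomp Require Import all_classical all_reals.
From mathcomp Require Import topology normedtype derive.
Set Implicit Arguments. Unset Strict Implicit. Unset Printing Implicit Defensive.
Import Order.TTheory GRing.Theory Num.Theory.
Import numFieldNormedType.Exports.
Local Open Scope classical_set_scope.
Local Open Scope ring_scope.

Section Defs.
Variable R : realType.
Variable n : nat.

(* A point of R^{2n+2} = R^{n+1}_x * R^{n+1}_y, identified with z = x + i y in C^{n+1}. *)
Definition pt := ('rV[R]_n.+1 * 'rV[R]_n.+1)%type.

Definition dotv (u v : 'rV[R]_n.+1) : R := \sum_(j < n.+1) u 0 j * v 0 j.

Definition sqn (p : pt) : R := dotv p.1 p.1 + dotv p.2 p.2.
Definition rr (p : pt) : R := Num.sqrt (sqn p).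

Definition uopen_ball : set pt := [set p | sqn p < 1].
Definition uclosed_ball : set pt := [set p | sqn p <= 1].
Definition usphere : set pt := [set p | sqn p = 1].

(* Complex scalars as pairs (Re, Im). *)
Definition cmul (a c : R * R) : R * R := (a.1 * c.1 - a.2 * c.2, a.1 * c.2 + a.2 * c.1).
Definition cadd (a c : R * R) : R * R := (a.1 + c.1, a.2 + c.2).
Definition cinv (a : R * R) : R * R :=
  (a.1 / (a.1 ^+ 2 + a.2 ^+ 2), - a.2 / (a.1 ^+ 2 + a.2 ^+ 2)).
Definition creal (t : R) : R * R := (t, 0).
(* complex scalar times complex vector: c * (x + i y) *)
Definition cscale (c : R * R) (p : pt) : pt :=
  (c.1 *: p.1 - c.2 *: p.2, c.1 *: p.2 + c.2 *: p.1).
(* \bar b . z = sum_j conj(b_j) z_j *)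
Definition cdotbar (b z : pt) : R * R :=
  \big[cadd/(0, 0)]_(j < n.+1) cmul (b.1 0 j, - b.2 0 j) (z.1 0 j, z.2 0 j).

Definition Phi (b : pt) (z : pt) : pt :=
  let s := Num.sqrt (1 - sqn b) in
  let w := cadd (creal 1) (cdotbar b z) in
  cscale (cmul (creal s) (cinv w)) z +
  cscale (cmul (creal (1 / (1 + s))) (cadd (creal 1) (cmul (creal s) (cinv w)))) b.

Definition Wb (b : pt) (p : pt) : R :=
  (1 - dotv b.1 b.1 - dotv b.2 b.2) /
  ((1 + dotv b.1 p.1 + dotv b.2 p.2) ^+ 2 + (dotv b.2 p.1 - dotv b.1 p.2) ^+ 2).

(* Complex structure J_R: J(d/dx_j) = - d/dy_j, J(d/dy_j) = d/dx_j,
   so J(u, v) = (v, - u) on tangent vectors (u along x, v along y). *)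
Definition JR (X : pt) : pt := (X.2, - X.1).

(* 1-forms (as functions point -> tangent vector -> R) *)
Definition dr (p : pt) (X : pt) : R := (dotv p.1 X.1 + dotv p.2 X.2) / rr p.
Definition theta (p : pt) (X : pt) : R :=
  (dotv p.1 X.2 - dotv p.2 X.1) / (rr p ^+ 2).

Definition dfun (f : pt -> R) (p : pt) (X : pt) : R := derive f p X.

(* exterior derivative of a 1-form, convention
   d beta(X,Y) = X(beta(Y)) - Y(beta(X)) - beta([X,Y]) with constant vector fields *)
Definition dform1 (a : pt -> pt -> R) (p : pt) (X Y : pt) : R :=
  derive (fun q => a q Y) p X - derive (fun q => a q X) p Y.

Definition wedge (a c : pt -> pt -> R) (p : pt) (X Y : pt) : R :=
  a p X * c p Y - a p Y * c p X.

Definition pull1 (F : pt -> pt) (a : pt -> pt -> R) (p : pt) (X : pt) : R :=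
  a (F p) ('d F p X).
Definition pull2 (F : pt -> pt) (a : pt -> pt -> pt -> R) (p : pt) (X Y : pt) : R :=
  a (F p) ('d F p X) ('d F p Y).

Fixpoint Ck (k : nat) (U : set pt) (f : pt -> pt) : Prop :=
  match k with
  | 0%N => forall p, U p -> {for p, continuous f}
  | k'.+1 => (forall p, U p -> differentiable f p) /\
             (forall v : pt, Ck k' U (fun q => derive f q v))
  end.
Definition smooth_on (U : set pt) (f : pt -> pt) : Prop := forall k, Ck k U f.

Definition JR_holomorphic_at (F : pt -> pt) (p : pt) : Prop :=
  forall X : pt, JR ('d F p X) = 'd F p (JR X).

Definition uclosed_ball_diffeo (F : pt -> pt) : Prop :=
  (exists U : set pt, open U /\ uclosed_ball `<=` U /\ smooth_on U F) /\
  (forall p, uclosed_ball p -> uclosed_ball (F p)) /\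
  exists G : pt -> pt,
    (exists U : set pt, open U /\ uclosed_ball `<=` U /\ smooth_on U G) /\
    (forall q, uclosed_ball q -> uclosed_ball (G q)) /\
    (forall p, uclosed_ball p -> G (F p) = p) /\
    (forall q, uclosed_ball q -> F (G q) = q).

End Defs.

From Pilot Require Import Defs.
From HB Require Import structures.
From mathcomp Require Import all_boot all_order all_algebra.
From mathcomp Require Import all_classical all_reals.
From mathcomp Require Import topology normedtype landau derive.
From mathcomp Require Import ring lra.
Import Order.TTheory GRing.Theory Num.Theory.
Import numFieldNormedType.Exports.
Local Open Scope classical_set_scope.
Local Open Scope ring_scope.
Set Implicit Arguments. Unset Strict Implicit. Unset Printing Implicit Defensive.

(* Write [Phi_b z = A(z) z + B(z) b] with the complex coefficients [A = s / w] and
   [B = (1 + A) / (1 + s)], where [s = sqrt (1 - |b|^2)] and [w = 1 + <z, b>]; every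
   claim then becomes a rational identity between hermitian products.  On the
   half-space [Re w > 0], which contains the closed ball because [|<z, b>| < 1], the
   map is smooth, and since [dA(X) = - s <X, b> / w^2] its differential
   [dA(X) z + A X + dA(X) b / (1 + s)] is complex linear in [X], i.e. [J_R]-holomorphic.
   The identity [1 - |Phi_b z|^2 = W_b(z) (1 - |z|^2)] with [W_b = s^2 / |w|^2] shows
   that the closed ball and the sphere are preserved, and [1 - <Phi_b z, b> = s^2 / w]
   shows that [Phi_{-b}] inverts [Phi_b].  On the sphere [<dPhi X, Phi_b z> = W_b <X, z>],
   whose real and imaginary parts are the pullback formulas for [dr] and [theta];
   (3) follows by inserting them into the explicit formula for [d theta] obtained
   from [theta(X) = Im <X, z> / |z|^2]. *)

Section LocallyEqual.
Variables (R : realType) (V W : normedModType R).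

Lemma near_eq_differentiable (f g : V -> W) (p : V) :
  {near p, f =1 g} -> differentiable f p -> differentiable g p.
Proof.
move=> fg df; pose h := g - f.
have hp : h p = 0 by rewrite /h !fctE (nbhs_singleton fg) subrr.
have h_near0 : \forall x \near (0 : V), h (x + p) = 0.
  have : \forall x \near (0 : V), f (x + (p - 0)) = g (x + (p - 0)).
    by rewrite -(near_shift 0 p (fun x => f x = g x)).
  by apply: filterS => x; rewrite subr0 /h !fctE => ->; rewrite subrr.
have h_littleo : h \o shift p = cst (h p) + 0 +o_ 0 id.
  apply/eqaddoP => e e0; apply: filterS h_near0 => x /= hx.
  rewrite hp !fctE hx /= addr0 subr0 normr0.
  by apply: mulr_ge0; [exact: ltW | exact: normr_ge0].
have dh : differentiable h p.
  have dh0 : 'd h p = 0 :> (V -> W).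
    by apply: diff_unique => //; exact: cst_continuous.
  by apply/diff_locallyP; rewrite dh0; split => //; exact: cst_continuous.
have -> : g = f + h by rewrite /h addrC subrK.
exact: differentiableD.
Unshelve. all: by end_near. Qed.

End LocallyEqual.

Section ScalarCk.
Variables (R : realType) (V : normedModType R).
Implicit Types (U : set V) (f g : V -> R).

Fixpoint CkR k U f : Prop :=
  match k with
  | 0%N => forall p, U p -> {for p, continuous f}
  | k'.+1 => (forall p, U p -> differentiable f p) /\
             (forall v, CkR k' U (fun q => 'D_v f q))
  end.

Lemma CkR_eq_on k U f g : open U -> {in U, f =1 g} -> CkR k U f -> CkR k U g.
Proof.
move=> oU; elim: k f g => [|k IH] f g fg /=.
  move=> cf p Up; have nfg : {near p, f =1 g}.
    by apply: filterS (open_nbhs_nbhs (conj oU Up)) => q /mem_set /fg.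
  have gfp := cvg_trans (near_eq_cvg nfg) (cf p Up).
  by rewrite (fg p (mem_set Up)) in gfp; exact: gfp.
move=> [df ddf]; split => [p Up | v].
  apply: near_eq_differentiable (df p Up).
  by apply: filterS (open_nbhs_nbhs (conj oU Up)) => q /mem_set /fg.
apply: IH (ddf v) => q /set_mem Uq; apply: near_eq_derive.
by apply: filterS (open_nbhs_nbhs (conj oU Uq)) => r /mem_set /fg.
Qed.

Lemma CkRW k U f : CkR k.+1 U f -> CkR k U f.
Proof.
elim: k f => [|k IH] f [df ddf] /=.
  by move=> p Up; exact: differentiable_continuous (df p Up).
by split => // v; apply: IH; exact: ddf.
Qed.

Lemma CkR_cst k U (c : R) : CkR k U (fun _ => c).
Proof.
elim: k c => [|k IH] c /=; first by move=> p _; exact: cst_continuous.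
split=> [p _|v]; first exact: differentiable_cst.
have -> : (fun q => 'D_v (fun _ : V => c) q) = (fun _ => 0).
  by apply: funext => q; exact: derive_cst.
exact: IH.
Qed.

Lemma CkR_const_derive k U f : (forall p, differentiable f p) ->
  (forall v, exists c, forall q, 'D_v f q = c) -> CkR k U f.
Proof.
case: k => [|k] df dc /=; first by move=> p _; exact: differentiable_continuous.
split=> [p _|v]; first exact: df.
have [c hc] := dc v.
have -> : (fun q => 'D_v f q) = (fun _ => c) by apply: funext.
exact: CkR_cst.
Qed.

Section Algebra.
Variable U : set V.
Hypothesis oU : open U.

Lemma CkRD k f g : CkR k U f -> CkR k U g -> CkR k U (fun q => f q + g q).
Proof.
elim: k f g => [|k IH] f g /=.
  by move=> cf cg p Up; apply: continuousD; [exact: cf | exact: cg].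
move=> [df ddf] [dg ddg]; split => [p Up | v].
  exact: differentiableD (df p Up) (dg p Up).
apply: (CkR_eq_on (f := fun q => 'D_v f q + 'D_v g q)) => //.
  move=> q /set_mem Uq; symmetry; apply: deriveD; apply: diff_derivable; [exact: df | exact: dg].
exact: IH.
Qed.

Lemma CkRM k f g : CkR k U f -> CkR k U g -> CkR k U (fun q => f q * g q).
Proof.
elim: k f g => [|k IH] f g /=.
  by move=> cf cg p Up; apply: continuousM; [exact: cf | exact: cg].
move=> [df ddf] [dg ddg]; split => [p Up | v].
  exact: differentiableM (df p Up) (dg p Up).
apply: (CkR_eq_on (f := fun q => f q * 'D_v g q + g q * 'D_v f q)) => //.
  move=> q /set_mem Uq; symmetry; apply: deriveM; apply: diff_derivable; [exact: df | exact: dg].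
by apply: CkRD; apply: IH => //; apply: CkRW; split.
Qed.

Lemma CkRN k f : CkR k U f -> CkR k U (fun q => - f q).
Proof.
move=> cf; apply: (CkR_eq_on (f := fun q => -1 * f q)) => //.
  by move=> q _; rewrite mulN1r.
by apply: CkRM => //; exact: CkR_cst.
Qed.

Lemma CkRB k f g : CkR k U f -> CkR k U g -> CkR k U (fun q => f q - g q).
Proof. by move=> cf cg; apply: CkRD => //; exact: CkRN. Qed.

Lemma CkRV k f : {in U, forall q, f q != 0} -> CkR k U f ->
  CkR k U (fun q => (f q)^-1).
Proof.
move=> f0; elim: k f f0 => [|k IH] f f0 /=.
  by move=> cf p Up; apply: cvgV; [exact: f0 (mem_set Up) | exact: cf].
move=> [df ddf]; split => [p Up | v].
  by apply: differentiableV; [exact: df | exact: f0 (mem_set Up)].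
apply: (CkR_eq_on (f := fun q => - ((f q)^-1 * (f q)^-1) * 'D_v f q)) => //.
  move=> q Uq; rewrite deriveV ?f0 //; last by apply: diff_derivable; exact: df (set_mem Uq).
  by rewrite -exprVn expr2.
have cfV : CkR k U (fun q => (f q)^-1) by apply: IH => //; apply: CkRW; split.
by apply: CkRM => //; apply: CkRN; apply: CkRM.
Qed.

End Algebra.
End ScalarCk.

(* The library rules [is_deriveD], [is_deriveM], ... for functions written pointwise. *)
Section PointwiseDerive.
Variables (R : realType) (V : normedModType R).
Implicit Types (f g : V -> R) (p X : V) (a c : R).

Lemma is_derive_const (c : R) p X : is_derive p X (fun _ => c) 0.
Proof. exact: is_derive_cst. Qed.

Lemma is_derive_add f g p X a c : is_derive p X f a -> is_derive p X g c ->
  is_derive p X (fun q => f q + g q) (a + c).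
Proof. exact: is_deriveD. Qed.

Lemma is_derive_opp f p X a : is_derive p X f a ->
  is_derive p X (fun q => - f q) (- a).
Proof. exact: is_deriveN. Qed.

Lemma is_derive_sub f g p X a c : is_derive p X f a -> is_derive p X g c ->
  is_derive p X (fun q => f q - g q) (a - c).
Proof. exact: is_deriveB. Qed.

Lemma is_derive_mul f g p X a c : is_derive p X f a -> is_derive p X g c ->
  is_derive p X (fun q => f q * g q) (f p * c + g p * a).
Proof. exact: is_deriveM. Qed.

Lemma is_derive_scale f p X (k : R) a : is_derive p X f a ->
  is_derive p X (fun q => k * f q) (k * a).
Proof.
move=> fa; apply: is_derive_eq (is_derive_mul (is_derive_const k p X) fa) _.
by rewrite mulr0 addr0.
Qed.

Lemma is_derive_inv f p X a : f p != 0 -> is_derive p X f a ->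
  is_derive p X (fun q => (f q)^-1) (- a / f p ^+ 2).
Proof.
move=> fp0 [fX fa]; apply: DeriveDef; first exact: derivableV.
by rewrite deriveV // fa scaleNr mulNr mulrC.
Qed.

End PointwiseDerive.

Lemma derive_linear_comp (R : realType) (V W W' : normedModType R)
    (L : W -> W') (F : V -> W) (p v : V) :
  linear L -> continuous L -> differentiable F p ->
  'D_v (L \o F) p = L ('D_v F p).
Proof.
move=> lin_L cL dF.
pose L' : {linear W -> W'} := HB.pack L (GRing.isLinear.Build _ _ _ _ _ lin_L).
have cL' : continuous L' by [].
have dL : differentiable L' (F p) by exact: linear_differentiable.
rewrite !deriveE //; last exact: differentiable_comp.
by rewrite diff_comp //= (diff_lin _ cL').
Qed.

Section Coordinates.
Variables (R : realType) (n : nat).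
Local Notation pt := (pt R n).
Implicit Types (p q v X : pt) (j : 'I_n.+1).

Definition xcoord j q : R := q.1 0 j.
Definition ycoord j q : R := q.2 0 j.
Definition xunit j : pt := (delta_mx 0 j, 0).
Definition yunit j : pt := (0, delta_mx 0 j).

Lemma pt_ext p q : (forall j, xcoord j p = xcoord j q) ->
  (forall j, ycoord j p = ycoord j q) -> p = q.
Proof.
case: p q => [p1 p2] [q1 q2] /= h1 h2.
by congr (_, _); apply/rowP => j; [exact: h1 | exact: h2].
Qed.

Lemma pt_coordE q : q = \sum_j (xcoord j q *: xunit j + ycoord j q *: yunit j).
Proof.
apply: pt_ext => j.
  rewrite /xcoord (big_morph (fun x : pt => x.1) (id1 := 0) (op1 := +%R)) //=.
  rewrite summxE (bigD1 j) //= big1 => [|i ij]; rewrite !mxE /=.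
    by rewrite eqxx mulr1 mulr0 !addr0.
  by rewrite eq_sym (negbTE ij) !mulr0 addr0.
rewrite /ycoord (big_morph (fun x : pt => x.2) (id1 := 0) (op1 := +%R)) //=.
rewrite summxE (bigD1 j) //= big1 => [|i ij]; rewrite !mxE /=.
  by rewrite eqxx mulr1 mulr0 add0r addr0.
by rewrite eq_sym (negbTE ij) !mulr0 addr0.
Qed.

Lemma xcoord_linear j : linear (xcoord j).
Proof. by move=> a u v; rewrite /xcoord /= !mxE. Qed.
Lemma ycoord_linear j : linear (ycoord j).
Proof. by move=> a u v; rewrite /ycoord /= !mxE. Qed.

Lemma xcoord_continuous j : continuous (xcoord j).
Proof.
move=> q; apply: (continuous_comp (f := fst) (g := fun M : 'rV[R]_n.+1 => M 0 j)).
  exact: cvg_fst.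
exact: coord_continuous.
Qed.
Lemma ycoord_continuous j : continuous (ycoord j).
Proof.
move=> q; apply: (continuous_comp (f := snd) (g := fun M : 'rV[R]_n.+1 => M 0 j)).
  exact: cvg_snd.
exact: coord_continuous.
Qed.

Lemma xcoord_differentiable j p : differentiable (xcoord j) p.
Proof.
pose L : {linear pt -> R} := HB.pack (xcoord j) (GRing.isLinear.Build _ _ _ _ _ (xcoord_linear j)).
have cL : continuous L by exact: xcoord_continuous.
exact: (linear_differentiable p cL).
Qed.

Lemma ycoord_differentiable j p : differentiable (ycoord j) p.
Proof.
pose L : {linear pt -> R} := HB.pack (ycoord j) (GRing.isLinear.Build _ _ _ _ _ (ycoord_linear j)).
have cL : continuous L by exact: ycoord_continuous.
exact: (linear_differentiable p cL).
Qed.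

Lemma linear_pt_differentiable (f : pt -> R) p : linear f -> differentiable f p.
Proof.
move=> lin_f.
have -> : f = \sum_j (fun q => xcoord j q *: f (xunit j) + ycoord j q *: f (yunit j)).
  pose L : {linear pt -> R} := HB.pack f (GRing.isLinear.Build _ _ _ _ _ lin_f).
  apply: funext => q; rewrite fct_sumE [in LHS](pt_coordE q) -[f _]/(L _) linear_sum.
  by apply: eq_bigr => j _; rewrite linearD !linearZ.
apply: differentiable_sum => j; apply: differentiableD; apply: differentiableZl.
  exact: xcoord_differentiable.
exact: ycoord_differentiable.
Qed.

Lemma is_derive_linear_pt (f : pt -> R) p X : linear f -> is_derive p X f (f X).
Proof.
move=> lin_f; apply: DeriveDef.
  exact/diff_derivable/linear_pt_differentiable.
have cf : continuous f.
  by move=> q; apply: differentiable_continuous; exact: linear_pt_differentiable.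
have -> : 'D_X f p = 'D_X (f \o id) p by [].
by rewrite derive_linear_comp ?derive_id //; exact: differentiable_id.
Qed.

Lemma CkR_linear_pt k (U : set pt) (f : pt -> R) : linear f -> CkR k U f.
Proof.
move=> lin_f; apply: CkR_const_derive => [p|v].
  exact: linear_pt_differentiable.
by exists (f v) => q; have [_ ->] := is_derive_linear_pt q v lin_f.
Qed.

Lemma differentiable_of_coords (V : normedModType R) (F : V -> pt) (p : V) :
  (forall j, differentiable (xcoord j \o F) p /\ differentiable (ycoord j \o F) p) ->
  differentiable F p.
Proof.
move=> dF.
have -> : F = \sum_j (fun z => (xcoord j \o F) z *: xunit j + (ycoord j \o F) z *: yunit j).
  by apply: funext => z; rewrite fct_sumE [LHS]pt_coordE.
apply: differentiable_sum => j; have [dx dy] := dF j.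
by apply: differentiableD; apply: differentiableZl.
Qed.

Lemma smooth_on_of_coords (U : set pt) (F : pt -> pt) : open U ->
  (forall k j, CkR k U (xcoord j \o F) /\ CkR k U (ycoord j \o F)) ->
  smooth_on U F.
Proof.
move=> oU cF k; elim: k F cF => [|k IH] F cF.
  move=> p Up /=; apply/differentiable_continuous/differentiable_of_coords => j.
  by have [[dx _] [dy _]] := cF 1%N j; split; [exact: dx | exact: dy].
have dF p : U p -> differentiable F p.
  move=> Up; apply: differentiable_of_coords => j.
  by have [[dx _] [dy _]] := cF 1%N j; split; [exact: dx | exact: dy].
split=> // v; apply: IH => k' j; have [[_ dx] [_ dy]] := cF k'.+1 j.
split.
  apply: CkR_eq_on (dx v) => // q /set_mem Uq /=.
  by rewrite derive_linear_comp //; [exact: xcoord_linear | exact: xcoord_continuous | exact: dF].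
apply: CkR_eq_on (dy v) => // q /set_mem Uq /=.
by rewrite derive_linear_comp //; [exact: ycoord_linear | exact: ycoord_continuous | exact: dF].
Qed.

End Coordinates.

Section HermitianProduct.
Variables (R : realType) (n : nat).
Local Notation pt := (pt R n).
Local Notation dotv := (@dotv R n).
Implicit Types (a : R) (x y z : 'rV[R]_n.+1) (c : R * R) (u v w : pt).

Lemma dotvC x y : dotv x y = dotv y x.
Proof. by apply: eq_bigr => j _; rewrite mulrC. Qed.

Lemma dotvDl x y z : dotv (x + y) z = dotv x z + dotv y z.
Proof. by rewrite -big_split; apply: eq_bigr => j _; rewrite mxE mulrDl. Qed.

Lemma dotvZl a x y : dotv (a *: x) y = a * dotv x y.
Proof. by rewrite mulr_sumr; apply: eq_bigr => j _; rewrite mxE mulrA. Qed.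

Lemma dotvNl x y : dotv (- x) y = - dotv x y.
Proof. by rewrite -scaleN1r dotvZl mulN1r. Qed.

Lemma dotv_ge0 x : 0 <= dotv x x.
Proof. by apply: sumr_ge0 => j _; rewrite -expr2 sqr_ge0. Qed.

(* Reading [u = (x, y)] as [x + i y] in [C^{n+1}], the hermitian product
   [\sum_j u_j * conj (v_j)] is [hermRe u v + i * hermIm u v]. *)
Definition hermRe u v : R := dotv u.1 v.1 + dotv u.2 v.2.
Definition hermIm u v : R := dotv u.2 v.1 - dotv u.1 v.2.

Lemma hermReC u v : hermRe v u = hermRe u v.
Proof. by rewrite /hermRe dotvC (dotvC v.2). Qed.

Lemma hermImC u v : hermIm v u = - hermIm u v.
Proof. by rewrite /hermIm dotvC (dotvC v.1) opprB. Qed.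

Lemma hermIm_self u : hermIm u u = 0.
Proof. by rewrite /hermIm dotvC subrr. Qed.

Lemma hermReDl u v w : hermRe (u + v) w = hermRe u w + hermRe v w.
Proof. by rewrite /hermRe !dotvDl addrACA. Qed.

Lemma hermImDl u v w : hermIm (u + v) w = hermIm u w + hermIm v w.
Proof. by rewrite /hermIm !dotvDl opprD addrACA. Qed.

Lemma hermReDr u v w : hermRe w (u + v) = hermRe w u + hermRe w v.
Proof. by rewrite !(hermReC _ w) hermReDl. Qed.

Lemma hermImDr u v w : hermIm w (u + v) = hermIm w u + hermIm w v.
Proof. by rewrite !(hermImC _ w) hermImDl opprD. Qed.

Lemma hermReZl a u v : hermRe (a *: u) v = a * hermRe u v.
Proof. by rewrite /hermRe !dotvZl mulrDr. Qed.

Lemma hermImZl a u v : hermIm (a *: u) v = a * hermIm u v.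
Proof. by rewrite /hermIm !dotvZl mulrBr. Qed.

Lemma hermImZr a u v : hermIm u (a *: v) = a * hermIm u v.
Proof. by rewrite hermImC hermImZl -mulrN -hermImC. Qed.

Lemma hermReNr u v : hermRe u (- v) = - hermRe u v.
Proof. by rewrite -scaleN1r hermReC hermReZl hermReC mulN1r. Qed.

Lemma hermImNr u v : hermIm u (- v) = - hermIm u v.
Proof. by rewrite -scaleN1r hermImZr mulN1r. Qed.

Lemma hermRe_cscalel c u v :
  hermRe (cscale c u) v = c.1 * hermRe u v - c.2 * hermIm u v.
Proof. rewrite /hermRe /hermIm /cscale /= !dotvDl !dotvNl !dotvZl; ring. Qed.

Lemma hermIm_cscalel c u v :
  hermIm (cscale c u) v = c.1 * hermIm u v + c.2 * hermRe u v.
Proof. rewrite /hermRe /hermIm /cscale /= !dotvDl !dotvNl !dotvZl; ring. Qed.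

Lemma hermRe_cscaler c u v :
  hermRe u (cscale c v) = c.1 * hermRe u v + c.2 * hermIm u v.
Proof. by rewrite hermReC hermRe_cscalel hermReC hermImC mulrN opprK. Qed.

Lemma hermIm_cscaler c u v :
  hermIm u (cscale c v) = c.1 * hermIm u v - c.2 * hermRe u v.
Proof. rewrite hermImC hermIm_cscalel hermReC hermImC; ring. Qed.

Lemma JR_cscale u : JR u = cscale (0, -1) u.
Proof. by case: u => x y; rewrite /JR /cscale /= !scale0r !scaleN1r sub0r opprK add0r. Qed.

Lemma hermRe_JR u v : hermRe (JR u) v = hermIm u v.
Proof. by rewrite JR_cscale hermRe_cscalel /= mul0r sub0r mulN1r opprK. Qed.

Lemma hermIm_JR u v : hermIm (JR u) v = - hermRe u v.
Proof. by rewrite JR_cscale hermIm_cscalel /= mul0r add0r mulN1r. Qed.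

Lemma sqnE u : sqn u = hermRe u u.
Proof. by []. Qed.

Lemma sqn_ge0 u : 0 <= sqn u.
Proof. by apply: addr_ge0; exact: dotv_ge0. Qed.

Lemma sqnN u : sqn (- u) = sqn u.
Proof. by rewrite !sqnE hermReNr hermReC hermReNr opprK. Qed.

Lemma cdotbarE u v : cdotbar u v = (hermRe v u, hermIm v u).
Proof.
rewrite /cdotbar.
have -> : \big[@cadd R/(0, 0)]_j cmul (u.1 0 j, - u.2 0 j) (v.1 0 j, v.2 0 j) =
    (\sum_j (cmul (u.1 0 j, - u.2 0 j) (v.1 0 j, v.2 0 j)).1,
     \sum_j (cmul (u.1 0 j, - u.2 0 j) (v.1 0 j, v.2 0 j)).2).
  by elim/big_rec3: _ => //= j x y1 y2 _ ->.
rewrite /hermRe /hermIm /Defs.dotv /cmul /= -big_split -sumrN -big_split /=.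
by congr (_, _); apply: eq_bigr => j _; ring.
Qed.

Lemma hermRe_linear v : linear (hermRe ^~ v).
Proof. by move=> a u w; rewrite hermReDl hermReZl. Qed.

Lemma hermIm_linear v : linear (hermIm ^~ v).
Proof. by move=> a u w; rewrite hermImDl hermImZl. Qed.

Lemma hermIm_linearr u : linear (hermIm u).
Proof. by move=> a v w; rewrite hermImDr hermImZr. Qed.

End HermitianProduct.

Ltac herm_expand := do 3 rewrite ?hermReDl ?hermReDr ?hermImDl ?hermImDr
  ?hermRe_cscalel ?hermRe_cscaler ?hermIm_cscalel ?hermIm_cscaler /=.

Section ContactForms.
Variables (R : realType) (n : nat).
Local Notation pt := (pt R n).
Implicit Types (p q X Y : pt).

Lemma is_derive_sqn p X : is_derive p X (@sqn R n) (2 * hermRe p X).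
Proof.
have -> : @sqn R n = \sum_j (fun q => xcoord j q * xcoord j q + ycoord j q * ycoord j q).
  by apply: funext => q; rewrite fct_sumE /sqn /Defs.dotv -big_split.
apply: is_derive_eq.
  apply: is_derive_sum => j.
  by apply: is_derive_add; apply: is_derive_mul; apply: is_derive_linear_pt;
    [exact: xcoord_linear | exact: xcoord_linear | exact: ycoord_linear | exact: ycoord_linear].
rewrite /hermRe /Defs.dotv mulrDr !mulr_sumr -big_split /=.
by apply: eq_bigr => j _; rewrite /xcoord /ycoord; ring.
Qed.

Lemma drE q X : dr q X = hermRe q X / rr q.
Proof. by []. Qed.

Lemma rr_sphere q : usphere q -> rr q = 1.
Proof. by rewrite /rr => ->; rewrite sqrtr1. Qed.

Lemma thetaE q X : theta q X = hermIm X q / sqn q.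
Proof.
rewrite /theta /rr sqr_sqrtr ?sqn_ge0 //; congr (_ / _).
by rewrite /hermIm (dotvC X.2) (dotvC X.1).
Qed.

Lemma is_derive_theta q X Y : sqn q != 0 -> is_derive q X (fun r => theta r Y)
  (hermIm Y X / sqn q - hermIm Y q * (2 * hermRe q X) / sqn q ^+ 2).
Proof.
move=> q0; have -> : (fun r => theta r Y) = fun r => hermIm Y r * (sqn r)^-1.
  by apply: funext => r; rewrite thetaE.
apply: is_derive_eq.
  exact: is_derive_mul (is_derive_linear_pt q X (hermIm_linearr Y))
                       (is_derive_inv q0 (is_derive_sqn q X)).
by rewrite /=; field.
Qed.

Lemma dthetaE q X Y : sqn q != 0 -> dform1 (@theta R n) q X Y =
  (hermIm Y X - hermIm X Y) / sqn q
  - 2 * (hermIm Y q * hermRe q X - hermIm X q * hermRe q Y) / sqn q ^+ 2.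
Proof.
move=> q0; rewrite /dform1.
have [_ ->] := is_derive_theta X Y q0; have [_ ->] := is_derive_theta Y X q0.
by field.
Qed.

End ContactForms.

Section MoebiusMap.
Variables (R : realType) (n : nat) (b : pt R n).
Hypothesis b_lt1 : sqn b < 1.
Local Notation pt := (pt R n).
Implicit Types (p q X Y : pt).

Definition sb : R := Num.sqrt (1 - sqn b).

Lemma sb_gt0 : 0 < sb.
Proof. by rewrite sqrtr_gt0 subr_gt0. Qed.

Lemma sqnbE : sqn b = 1 - sb ^+ 2.
Proof. by rewrite sqr_sqrtr ?subr_ge0 ?ltW // subKr. Qed.

Lemma sb1_neq0 : 1 + sb != 0.
Proof. by apply: lt0r_neq0; have := sb_gt0; lra. Qed.

Definition wre q := 1 + hermRe q b.
Definition wim q := hermIm q b.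
Definition wnorm2 q := wre q ^+ 2 + wim q ^+ 2.

(* [Phi b q = A q * q + B q * b] with the complex coefficients [A = sb / w = Are + i Aim]
   and [B = (1 + A) / (1 + sb) = Bre + i Bim], where [w = wre + i wim = 1 + <q, b>]. *)
Definition Are q := sb * (wre q / wnorm2 q).
Definition Aim q := - (sb * (wim q / wnorm2 q)).
Definition Bre q := (1 + Are q) / (1 + sb).
Definition Bim q := Aim q / (1 + sb).

Lemma PhiE q : Phi b q = cscale (Are q, Aim q) q + cscale (Bre q, Bim q) b.
Proof.
rewrite /Phi -/sb cdotbarE /cadd /creal /cmul /cinv /= !mul0r !add0r !subr0 !addr0.
congr (cscale (_, _) _ + cscale (_, _) _);
  by rewrite /Bre /Bim /Are /Aim /wnorm2 /wre /wim; ring.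
Qed.

Definition Phi_dom : set pt := [set q | 0 < wre q].

Lemma open_Phi_dom : open Phi_dom.
Proof.
apply: (open_comp (f := wre) (D := [set x | 0 < x])); last exact: open_gt.
move=> q _; apply: differentiable_continuous; apply: differentiableD.
  exact: differentiable_cst.
exact: linear_pt_differentiable (hermRe_linear b).
Qed.

Lemma closed_ball_sub_Phi_dom : @uclosed_ball R n `<=` Phi_dom.
Proof.
move=> q; rewrite /uclosed_ball /Phi_dom /wre /= => q_le1.
have := sqn_ge0 (q + b); rewrite sqnE hermReDl !hermReDr (hermReC q b) -!sqnE.
by have := b_lt1; lra.
Qed.

Lemma wnorm2_gt0 q : Phi_dom q -> 0 < wnorm2 q.
Proof.
rewrite /Phi_dom /wnorm2 /= => w0.
by have := sqr_ge0 (wim q); have := exprn_gt0 2 w0; lra.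
Qed.

Lemma WbE q : Wb b q = sb ^+ 2 / wnorm2 q.
Proof.
rewrite /Wb sqr_sqrtr ?subr_ge0 ?ltW // /wnorm2 /wre /wim /sqn /hermRe /hermIm.
by rewrite (dotvC b.1) (dotvC b.2) (dotvC b.2 q.1) (dotvC b.1 q.2); congr (_ / _); ring.
Qed.

Lemma sqn_Phi q : Phi_dom q -> sqn (Phi b q) = 1 - Wb b q * (1 - sqn q).
Proof.
move=> /wnorm2_gt0 /lt0r_neq0; rewrite WbE PhiE sqnE; herm_expand.
rewrite (hermReC q b) (hermImC q b) !hermIm_self -!sqnE sqnbE.
rewrite /Bre /Bim /Are /Aim /wnorm2 /wre /wim => w0.
by field; rewrite w0 sb1_neq0.
Qed.

Lemma Phi_xcoordE j q : xcoord j (Phi b q) =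
  Are q * xcoord j q - Aim q * ycoord j q + (Bre q * xcoord j b - Bim q * ycoord j b).
Proof. by rewrite PhiE /cscale /xcoord /ycoord /= !mxE. Qed.

Lemma Phi_ycoordE j q : ycoord j (Phi b q) =
  Are q * ycoord j q + Aim q * xcoord j q + (Bre q * ycoord j b + Bim q * xcoord j b).
Proof. by rewrite PhiE /cscale /xcoord /ycoord /= !mxE. Qed.

Lemma Phi_smooth : smooth_on Phi_dom (Phi b).
Proof.
have oU : open Phi_dom by exact: open_Phi_dom.
apply: smooth_on_of_coords => // k j.
have cwre : CkR k Phi_dom wre.
  by apply: (CkRD oU); [exact: CkR_cst | exact: CkR_linear_pt (hermRe_linear b)].
have cwim : CkR k Phi_dom wim by exact: CkR_linear_pt (hermIm_linear b).
have cwn : CkR k Phi_dom (fun q => (wnorm2 q)^-1).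
  apply: (CkRV oU) => [q /set_mem /wnorm2_gt0 /lt0r_neq0 //|].
  by apply: (CkRD oU); apply: CkRM.
have cAre : CkR k Phi_dom Are by apply: (CkRM oU); [exact: CkR_cst | exact: CkRM].
have cAim : CkR k Phi_dom Aim.
  by apply: (CkRN oU); apply: (CkRM oU); [exact: CkR_cst | exact: CkRM].
have cBre : CkR k Phi_dom Bre.
  by apply: (CkRM oU); [apply: (CkRD oU) => //; exact: CkR_cst | exact: CkR_cst].
have cBim : CkR k Phi_dom Bim by apply: (CkRM oU) => //; exact: CkR_cst.
have cx j' : CkR k Phi_dom (xcoord j') by exact: CkR_linear_pt (xcoord_linear j').
have cy j' : CkR k Phi_dom (ycoord j') by exact: CkR_linear_pt (ycoord_linear j').
split.
  apply: (CkR_eq_on oU (fun q _ => esym (Phi_xcoordE j q))).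
  by apply: (CkRD oU); apply: (CkRB oU); apply: (CkRM oU) => //; exact: CkR_cst.
apply: (CkR_eq_on oU (fun q _ => esym (Phi_ycoordE j q))).
by apply: (CkRD oU); apply: (CkRD oU); apply: (CkRM oU) => //; exact: CkR_cst.
Qed.

Lemma Phi_differentiable p : Phi_dom p -> differentiable (Phi b) p.
Proof. by have [dPhi _] := Phi_smooth 1%N; exact: dPhi. Qed.

(* [dAre p X + i dAim p X = - sb <X, b> / (1 + <p, b>)^2] is the derivative of [A] along [X]. *)
Definition dAre p X := - sb * (hermRe X b * (wre p ^+ 2 - wim p ^+ 2)
  + 2 * hermIm X b * wre p * wim p) / wnorm2 p ^+ 2.
Definition dAim p X := - sb * (hermIm X b * (wre p ^+ 2 - wim p ^+ 2)
  - 2 * hermRe X b * wre p * wim p) / wnorm2 p ^+ 2.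

Definition DPhi p X : pt := cscale (dAre p X, dAim p X) p + cscale (Are p, Aim p) X
  + cscale (dAre p X / (1 + sb), dAim p X / (1 + sb)) b.

Lemma is_derive_wre p X : is_derive p X wre (hermRe X b).
Proof.
apply: is_derive_eq (is_derive_add (is_derive_const 1 p X)
  (is_derive_linear_pt p X (hermRe_linear b))) _.
by rewrite add0r.
Qed.

Lemma is_derive_wim p X : is_derive p X wim (hermIm X b).
Proof. exact: is_derive_linear_pt (hermIm_linear b). Qed.

Lemma is_derive_wnorm2 p X :
  is_derive p X wnorm2 (2 * (wre p * hermRe X b + wim p * hermIm X b)).
Proof.
apply: is_derive_eq.
  exact: is_derive_add (is_derive_mul (is_derive_wre p X) (is_derive_wre p X))
                       (is_derive_mul (is_derive_wim p X) (is_derive_wim p X)).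
by ring.
Qed.

Lemma is_derive_Are p X : Phi_dom p -> is_derive p X Are (dAre p X).
Proof.
move=> /wnorm2_gt0 /lt0r_neq0 w0.
apply: is_derive_eq (is_derive_scale sb (is_derive_mul (is_derive_wre p X)
                       (is_derive_inv w0 (is_derive_wnorm2 p X)))) _.
by move: w0; rewrite /dAre /wnorm2 => w0; field.
Qed.

Lemma is_derive_Aim p X : Phi_dom p -> is_derive p X Aim (dAim p X).
Proof.
move=> /wnorm2_gt0 /lt0r_neq0 w0.
apply: is_derive_eq (is_derive_opp (is_derive_scale sb (is_derive_mul (is_derive_wim p X)
                       (is_derive_inv w0 (is_derive_wnorm2 p X))))) _.
by move: w0; rewrite /dAim /wnorm2 => w0; field.
Qed.

Lemma is_derive_Phi_xcoord p X j : Phi_dom p ->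
  is_derive p X (xcoord j \o Phi b) (xcoord j (DPhi p X)).
Proof.
move=> Up; have -> : xcoord j \o Phi b = fun q =>
    Are q * xcoord j q - Aim q * ycoord j q + (Bre q * xcoord j b - Bim q * ycoord j b).
  by apply: funext => q; exact: Phi_xcoordE.
have dBre := is_derive_mul (is_derive_add (is_derive_const 1 p X) (is_derive_Are X Up))
                           (is_derive_const (1 + sb)^-1 p X).
have dBim := is_derive_mul (is_derive_Aim X Up) (is_derive_const (1 + sb)^-1 p X).
have dx := is_derive_linear_pt p X (xcoord_linear j).
have dy := is_derive_linear_pt p X (ycoord_linear j).
apply: is_derive_eq (is_derive_add
  (is_derive_sub (is_derive_mul (is_derive_Are X Up) dx) (is_derive_mul (is_derive_Aim X Up) dy))
  (is_derive_sub (is_derive_mul dBre (is_derive_const (xcoord j b) p X))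
                 (is_derive_mul dBim (is_derive_const (ycoord j b) p X)))) _.
by rewrite /DPhi /cscale /xcoord /ycoord /= !mxE; ring.
Qed.

Lemma is_derive_Phi_ycoord p X j : Phi_dom p ->
  is_derive p X (ycoord j \o Phi b) (ycoord j (DPhi p X)).
Proof.
move=> Up; have -> : ycoord j \o Phi b = fun q =>
    Are q * ycoord j q + Aim q * xcoord j q + (Bre q * ycoord j b + Bim q * xcoord j b).
  by apply: funext => q; exact: Phi_ycoordE.
have dBre := is_derive_mul (is_derive_add (is_derive_const 1 p X) (is_derive_Are X Up))
                           (is_derive_const (1 + sb)^-1 p X).
have dBim := is_derive_mul (is_derive_Aim X Up) (is_derive_const (1 + sb)^-1 p X).
have dx := is_derive_linear_pt p X (xcoord_linear j).
have dy := is_derive_linear_pt p X (ycoord_linear j).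
apply: is_derive_eq (is_derive_add
  (is_derive_add (is_derive_mul (is_derive_Are X Up) dy) (is_derive_mul (is_derive_Aim X Up) dx))
  (is_derive_add (is_derive_mul dBre (is_derive_const (ycoord j b) p X))
                 (is_derive_mul dBim (is_derive_const (xcoord j b) p X)))) _.
by rewrite /DPhi /cscale /xcoord /ycoord /= !mxE; ring.
Qed.

Lemma diff_PhiE p X : Phi_dom p -> 'd (Phi b) p X = DPhi p X.
Proof.
move=> Up; have dPhi := Phi_differentiable Up.
rewrite -deriveE //; apply: pt_ext => j.
  have [_ <-] := is_derive_Phi_xcoord X j Up.
  by rewrite derive_linear_comp //; [exact: xcoord_linear | exact: xcoord_continuous].
have [_ <-] := is_derive_Phi_ycoord X j Up.
by rewrite derive_linear_comp //; [exact: ycoord_linear | exact: ycoord_continuous].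
Qed.

Lemma Phi_JR_holomorphic p : Phi_dom p -> JR_holomorphic_at (Phi b) p.
Proof.
move=> Up X; rewrite !diff_PhiE // /DPhi /dAre /dAim !hermRe_JR !hermIm_JR.
by apply: pt_ext => j; rewrite /JR /cscale /xcoord /ycoord /= !mxE; ring.
Qed.

Lemma sphere_sub_Phi_dom p : usphere p -> Phi_dom p.
Proof. by move=> hp; apply: closed_ball_sub_Phi_dom => //; rewrite /uclosed_ball /= hp. Qed.

Lemma Phi_closed_ball p : uclosed_ball p -> uclosed_ball (Phi b p).
Proof.
move=> hp; have Up := closed_ball_sub_Phi_dom hp.
have p_le1 : sqn p <= 1 := hp.
rewrite /uclosed_ball /= (sqn_Phi Up) WbE.
have : 0 <= sb ^+ 2 / wnorm2 p * (1 - sqn p).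
  apply: mulr_ge0; last by rewrite subr_ge0.
  by apply: divr_ge0; [exact: sqr_ge0 | exact/ltW/wnorm2_gt0].
lra.
Qed.

Lemma Phi_sphere p : usphere p -> sqn (Phi b p) = 1.
Proof. by move=> hp; rewrite (sqn_Phi (sphere_sub_Phi_dom hp)) hp subrr mulr0 subr0. Qed.

Lemma hermRe_Phi_DPhi p X : usphere p ->
  hermRe (Phi b p) (DPhi p X) = Wb b p * hermRe p X.
Proof.
move=> hp; have /wnorm2_gt0 /lt0r_neq0 := sphere_sub_Phi_dom hp.
rewrite WbE /DPhi PhiE; herm_expand.
rewrite ?(hermReC p b) ?(hermImC p b) ?(hermReC X b) ?(hermImC X b) ?(hermReC X p) ?(hermImC X p).
rewrite ?hermIm_self -?sqnE hp sqnbE.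
rewrite /Bre /Bim /Are /Aim /dAre /dAim /wnorm2 /wre /wim => w0.
by field; rewrite w0 sb1_neq0.
Qed.

Lemma hermIm_DPhi_Phi p X : usphere p ->
  hermIm (DPhi p X) (Phi b p) = Wb b p * hermIm X p.
Proof.
move=> hp; have /wnorm2_gt0 /lt0r_neq0 := sphere_sub_Phi_dom hp.
rewrite WbE /DPhi PhiE; herm_expand.
rewrite ?(hermReC p b) ?(hermImC p b) ?(hermReC X b) ?(hermImC X b) ?(hermReC X p) ?(hermImC X p).
rewrite ?hermIm_self -?sqnE hp sqnbE.
rewrite /Bre /Bim /Are /Aim /dAre /dAim /wnorm2 /wre /wim => w0.
by field; rewrite w0 sb1_neq0.
Qed.

Lemma pull1_dr p X : usphere p -> pull1 (Phi b) (@dr R n) p X = Wb b p * dr p X.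
Proof.
move=> hp; rewrite /pull1 !drE (rr_sphere (Phi_sphere hp)) (rr_sphere hp) !divr1.
rewrite diff_PhiE; last exact: sphere_sub_Phi_dom.
exact: hermRe_Phi_DPhi.
Qed.

Lemma pull1_theta p X : usphere p -> pull1 (Phi b) (@theta R n) p X = Wb b p * theta p X.
Proof.
move=> hp; rewrite /pull1 !thetaE (Phi_sphere hp) hp !divr1.
rewrite diff_PhiE; last exact: sphere_sub_Phi_dom.
exact: hermIm_DPhi_Phi.
Qed.

Lemma is_derive_Wb p X : Phi_dom p -> is_derive p X (Wb b)
  (- (2 * (wre p * hermRe X b + wim p * hermIm X b)) / wnorm2 p ^+ 2 * sb ^+ 2).
Proof.
move=> /wnorm2_gt0 /lt0r_neq0 w0.
have -> : Wb b = fun q => (wnorm2 q)^-1 * sb ^+ 2.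
  by apply: funext => q; rewrite WbE mulrC.
apply: is_derive_eq (is_derive_mul (is_derive_inv w0 (is_derive_wnorm2 p X))
                                   (is_derive_const (sb ^+ 2) p X)) _.
by rewrite mulr0 add0r mulrC.
Qed.

Lemma pull2_dtheta p X Y : usphere p ->
  pull2 (Phi b) (dform1 (@theta R n)) p X Y =
    Wb b p * dform1 (@theta R n) p X Y
    + 2 * (Wb b p - Wb b p ^+ 2) * rr p * wedge (@dr R n) (@theta R n) p X Y
    + wedge (dfun (Wb b)) (@theta R n) p X Y
    + wedge (@dr R n) (fun q V => dfun (Wb b) q (JR V)) p X Y.
Proof.
move=> hp; have Up := sphere_sub_Phi_dom hp.
have Phi0 : sqn (Phi b p) != 0 by rewrite (Phi_sphere hp) oner_neq0.
have p0 : sqn p != 0 by rewrite hp oner_neq0.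
rewrite /pull2 (dthetaE _ _ Phi0) (dthetaE _ _ p0) (Phi_sphere hp) hp.
rewrite (diff_PhiE X Up) (diff_PhiE Y Up).
rewrite !(hermRe_Phi_DPhi _ hp) !(hermIm_DPhi_Phi _ hp).
rewrite /wedge /dfun !drE !thetaE (rr_sphere hp) hp.
have [_ ->] := is_derive_Wb X Up; have [_ ->] := is_derive_Wb Y Up.
have [_ ->] := is_derive_Wb (JR X) Up; have [_ ->] := is_derive_Wb (JR Y) Up.
rewrite (hermImC (DPhi p Y)) !hermRe_JR !hermIm_JR WbE /DPhi; herm_expand.
rewrite ?(hermReC p b) ?(hermImC p b) ?(hermReC X b) ?(hermImC X b) ?(hermReC Y b) ?(hermImC Y b).
rewrite ?(hermReC X p) ?(hermImC X p) ?(hermReC Y p) ?(hermImC Y p) ?(hermReC X Y) ?(hermImC X Y).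
rewrite ?hermIm_self -?sqnE hp sqnbE.
have := wnorm2_gt0 Up; rewrite /dAre /dAim /Are /Aim /wnorm2 /wre /wim => /lt0r_neq0 w0.
by field; rewrite w0 sb1_neq0.
Qed.

End MoebiusMap.

Section MoebiusInverse.
Variables (R : realType) (n : nat) (b : pt R n).
Hypothesis b_lt1 : sqn b < 1.
Implicit Types q : pt R n.

(* [1 - <Phi b q, b> = sb^2 / (1 + <q, b>)]: this is what makes [Phi (- b)] invert [Phi b]. *)
Lemma wre_Phi_opp q : Phi_dom b q -> wre (- b) (Phi b q) = sb b ^+ 2 * wre b q / wnorm2 b q.
Proof.
move=> /wnorm2_gt0 /lt0r_neq0; rewrite /wre hermReNr PhiE; herm_expand.
rewrite ?(hermReC q b) ?(hermImC q b) ?hermIm_self -?sqnE (sqnbE b_lt1).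
rewrite /Bre /Bim /Are /Aim /wnorm2 /wre /wim => w0.
by field; rewrite w0 (sb1_neq0 b_lt1).
Qed.

Lemma wim_Phi_opp q : Phi_dom b q -> wim (- b) (Phi b q) = - (sb b ^+ 2 * wim b q / wnorm2 b q).
Proof.
move=> /wnorm2_gt0 /lt0r_neq0; rewrite /wim hermImNr PhiE; herm_expand.
rewrite ?(hermReC q b) ?(hermImC q b) ?hermIm_self -?sqnE (sqnbE b_lt1).
rewrite /Bre /Bim /Are /Aim /wnorm2 /wre /wim => w0.
by field; rewrite w0 (sb1_neq0 b_lt1).
Qed.

Lemma PhiK q : Phi_dom b q -> Phi (- b) (Phi b q) = q.
Proof.
move=> Uq; have w0 := lt0r_neq0 (wnorm2_gt0 Uq).
have s0 := lt0r_neq0 (sb_gt0 b_lt1); have s10 := sb1_neq0 b_lt1.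
have sbN : sb (- b) = sb b by rewrite /sb sqnN.
have wnorm2N : wnorm2 (- b) (Phi b q) = sb b ^+ 4 / wnorm2 b q.
  rewrite /wnorm2 wre_Phi_opp // wim_Phi_opp //.
  by move: w0; rewrite /wnorm2 => w0; field.
have AreN : Are (- b) (Phi b q) = wre b q / sb b.
  rewrite /Are wnorm2N wre_Phi_opp // sbN.
  by move: w0; rewrite /wnorm2 => w0; field; rewrite w0 s0.
have AimN : Aim (- b) (Phi b q) = wim b q / sb b.
  rewrite /Aim wnorm2N wim_Phi_opp // sbN.
  by move: w0; rewrite /wnorm2 => w0; field; rewrite w0 s0.
apply: pt_ext => j.
  rewrite Phi_xcoordE /Bre /Bim AreN AimN sbN Phi_xcoordE Phi_ycoordE.
  rewrite /xcoord /ycoord [(- b).1]/= [(- b).2]/= !mxE.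
  by move: w0; rewrite /Bre /Bim /Are /Aim /wnorm2 => w0; field; rewrite w0 s0 s10.
rewrite Phi_ycoordE /Bre /Bim AreN AimN sbN Phi_xcoordE Phi_ycoordE.
rewrite /xcoord /ycoord [(- b).1]/= [(- b).2]/= !mxE.
by move: w0; rewrite /Bre /Bim /Are /Aim /wnorm2 => w0; field; rewrite w0 s0 s10.
Qed.

End MoebiusInverse.

Lemma Phi_uclosed_ball_diffeo (R : realType) (n : nat) (b : pt R n) :
  sqn b < 1 -> uclosed_ball_diffeo (Phi b).
Proof.
move=> b_lt1; have bN_lt1 : sqn (- b) < 1 by rewrite sqnN.
have smooth_near c : sqn c < 1 ->
    exists U, open U /\ @uclosed_ball R n `<=` U /\ smooth_on U (Phi c).
  move=> c_lt1; exists (Phi_dom c); split; first exact: open_Phi_dom.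
  by split; [exact: closed_ball_sub_Phi_dom | exact: Phi_smooth].
split; first exact: smooth_near.
split; first exact: Phi_closed_ball.
exists (Phi (- b)); split; first exact: smooth_near.
split; first exact: Phi_closed_ball.
split; first by move=> p /(closed_ball_sub_Phi_dom b_lt1) /(PhiK b_lt1).
by move=> q /(closed_ball_sub_Phi_dom bN_lt1) /(PhiK bN_lt1); rewrite opprK.
Qed.

Unset Implicit Arguments.

Theorem proposition2p1 (R : realType) (n : nat) (b : pt R n) :
  sqn b < 1 ->
  exists Phibar : pt R n -> pt R n,
    (* extension of Phi_b from the open ball *)
    (forall z, uopen_ball z -> Phibar z = Phi b z) /\
    (* (1) J_R-holomorphic diffeomorphism of the closed ball *)
    uclosed_ball_diffeo Phibar /\
    (forall p, uclosed_ball p -> JR_holomorphic_at Phibar p) /\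
    (* (2) *)
    (forall p, usphere p -> forall X : pt R n,
        pull1 Phibar (@dr R n) p X = Wb b p * dr p X /\
        pull1 Phibar (@theta R n) p X = Wb b p * theta p X) /\
    (* (3) *)
    (forall p, usphere p -> forall X Y : pt R n,
        pull2 Phibar (dform1 (@theta R n)) p X Y =
          Wb b p * dform1 (@theta R n) p X Y
          + 2 * (Wb b p - Wb b p ^+ 2) * rr p * wedge (@dr R n) (@theta R n) p X Y
          + wedge (dfun (Wb b)) (@theta R n) p X Y
          + wedge (@dr R n) (fun q V => dfun (Wb b) q (JR V)) p X Y).
Proof.
move=> b_lt1; exists (Phi b); split => //.
split; first exact: Phi_uclosed_ball_diffeo.
split; first by move=> p /(closed_ball_sub_Phi_dom b_lt1) /Phi_JR_holomorphic.
split; first by move=> p hp X; split; [exact: pull1_dr | exact: pull1_theta].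
by move=> p hp X Y; exact: pull2_dtheta.
Qed.
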